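(* Let $G$ and $H$ be finite simple graphs. (1) If $g(G)=g(H)=3$, then $G \times H$ is not a cover graph. (2) If $g(G)>3 \geq \chi(H)$, then $G\times H$ is a cover graph.
   Context: $g(G)$ denotes the girth of $G$ (length of a shortest cycle, $\infty$ if $G$ has no cycles) and $\chi(H)$ the chromatic number. A graph is a cover graph if it is the underlying (undirected) graph of the Hasse diagram of some finite partially ordered set. The direct product $G \times H$ has vertex set $V(G)\times V(H)$, with $(g_i,h_s)$ adjacent to $(g_j,h_t)$ if and only if $g_ig_j \in E(G)$ and $h_sh_t \in E(H)$. *)

(* Finite simple graphs are given as a symmetric irreflexive
   relation [e : rel T] on a finite type [T]. *)
From mathcomp Require Import all_boot.
Set Implicit Arguments. Unset Strict Implicit. Unset Printing Implicit Defensive.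

Section Graphs.
Variable T : finType.
Implicit Type e : rel T.

Definition is_graph_cycle e (s : seq T) : bool :=
  [&& 3 <= size s, uniq s & cycle e s].

Definition has_cycle_of_length e (k : nat) : bool :=
  [exists t : k.-tuple T, is_graph_cycle e t].

(* Girth: length of a shortest cycle; [None] stands for infinity (acyclic).
   A cycle has at most #|T| vertices, so it suffices to search k <= #|T|. *)
Definition girth e : option nat :=
  match [seq k <- iota 0 #|T|.+1 | has_cycle_of_length e k] with
  | k :: _ => Some k
  | [::] => None
  end.

Definition colorable e (k : nat) : bool :=
  [exists f : {ffun T -> 'I_k}, [forall x, forall y, e x y ==> (f x != f y)]].

(* Chromatic number: least k such that e is k-colourable
   ([find] on [iota 0 _] returns that least k; k = #|T| always works). *)
Definition chromatic_number e : nat := find (colorable e) (iota 0 #|T|.+1).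

Definition covers (le : rel T) (x y : T) : bool :=
  [&& x != y, le x y & [forall z, (le x z && le z y) ==> (z == x) || (z == y)]].

Definition is_partial_order (le : rel T) : Prop :=
  reflexive le /\ antisymmetric le /\ transitive le.

Definition cover_graph e : Prop :=
  exists le : rel T, is_partial_order le /\
    forall x y, e x y = covers le x y || covers le y x.
End Graphs.

Definition direct_product (T U : finType) (eG : rel T) (eH : rel U) : rel (T * U) :=
  fun a b => eG a.1 b.1 && eH a.2 b.2.

(* In a cover graph three pairwise adjacent vertices cannot
   exist: orient the triangle by the order; two of its edges then form a
   chain u < v < w of covers, so the third edge u w is not a cover.  Since a
   triangle in G and a triangle in H give a triangle in G x H, this proves (1).
   Conversely, let e be triangle-free with a proper colouring c into
   {0, 1, 2}.  Order the vertices by x <= y iff x = y, or x ~ y and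
   c x < c y, or c x = 0, c y = 2 and x ~ z ~ y for some z of colour 1.  Its
   covers are exactly the edges: a long step 0 -> 2 is never a cover (its
   middle vertex lies strictly between), and an edge x ~ y with colours 0, 2
   is a cover because a vertex between them would close a triangle.  For (2),
   G x H inherits triangle-freeness from G and a 3-colouring from H. *)
From mathcomp Require Import all_boot.
From mathcomp Require Import zify.

Set Implicit Arguments.
Unset Strict Implicit.
Unset Printing Implicit Defensive.

Definition triangle_free (T : finType) (e : rel T) : Prop :=
  forall x y z, e x y -> e y z -> e z x -> False.

Section CoverGraphs.
Variable T : finType.

Lemma covers_chain_not_edge (le : rel T) u v w :
  is_partial_order le -> covers le u v -> covers le v w ->
  ~~ (covers le u w || covers le w u).
Proof.
move=> [_ [le_anti le_trans]] /and3P[nuv luv _] /and3P[nvw lvw _].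
apply/negP; case/orP=> /and3P[nuw luw /forallP between_uw].
- by move: (between_uw v); rewrite luv lvw (negbTE nvw) eq_sym (negbTE nuv).
- have euw : u = w by apply: le_anti; rewrite luw (le_trans _ _ _ luv lvw).
  by rewrite euw eqxx in nuw.
Qed.

Lemma cover_graph_triangle_free (e : rel T) : cover_graph e -> triangle_free e.
Proof.
move=> [le [po e_covers]] x y z; rewrite !e_covers.
(* Any orientation of a triangle contains a chain of two covers. *)
do 3!case/orP=> ?; match goal with
  | H1 : is_true (covers le ?u ?v), H2 : is_true (covers le ?v ?w) |- _ =>
      by move/negP: (covers_chain_not_edge po H1 H2); apply; apply/orP; tauto
  end.
Qed.

Section ThreeColouring.
Variables (e : rel T) (c : T -> nat).
Hypotheses (e_sym : symmetric e) (e_tri_free : triangle_free e).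
Hypotheses (c_lt3 : forall x, c x < 3) (c_proper : forall x y, e x y -> c x != c y).

Definition colour_order : rel T := fun x y =>
  [|| x == y, e x y && (c x < c y) |
      [&& c x == 0, c y == 2 & [exists z, [&& e x z, e z y & c z == 1]]]].

Lemma colour_order_lt x y : colour_order x y -> x != y -> c x < c y.
Proof.
by case/or3P=> [/eqP -> | /andP[_ //] | /and3P[/eqP -> /eqP -> _]]; rewrite ?eqxx.
Qed.

Lemma colour_order_partial : is_partial_order colour_order.
Proof.
split; first by move=> x; rewrite /colour_order eqxx.
split.
- move=> x y /andP[lxy lyx]; apply/eqP; apply: contraT => nxy.
  have := colour_order_lt lxy nxy.
  by have := colour_order_lt lyx; rewrite eq_sym nxy; lia.
- move=> y x z lxy lyz.
  have [-> // | nxy] := eqVneq x y; have [<- // | nyz] := eqVneq y z.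
  move: lxy lyz; rewrite /colour_order (negbTE nxy) (negbTE nyz) /=.
  have cz := c_lt3 z.
  (* A long step already spans all three colours, so no strict step can
     precede or follow it. *)
  case/orP=> [/andP[exy cxy] | /and3P[_ /eqP cy2 _]]; last first.
    by case/orP=> [/andP[_] | /and3P[/eqP]]; rewrite cy2 // ltnNge -ltnS cz.
  case/orP=> [/andP[eyz cyz] | /and3P[/eqP cy0]]; last by rewrite cy0 in cxy.
  apply/or3P/Or33/and3P; split; [apply/eqP; lia | apply/eqP; lia |].
  by apply/existsP; exists y; rewrite exy eyz; apply/eqP; lia.
Qed.

Lemma edge_covers x y : e x y -> c x < c y -> covers colour_order x y.
Proof.
move=> exy cxy; apply/and3P; split.
- by apply: contraTneq cxy => ->; rewrite ltnn.
- by rewrite /colour_order exy cxy orbT.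
apply/forallP=> z; apply/implyP=> /andP[lxz lzy].
have [// | nzx] := eqVneq z x; have [// | nzy] := eqVneq z y; exfalso.
have cxz : c x < c z by apply: colour_order_lt; rewrite // eq_sym.
have czy := colour_order_lt lzy nzy.
have /and3P[/eqP cx0 /eqP cz1 /eqP cy2] : [&& c x == 0, c z == 1 & c y == 2].
  by have := c_lt3 y; apply: contraLR; lia.
move: lxz lzy; rewrite /colour_order eq_sym (negbTE nzx) (negbTE nzy) cz1 /=.
by rewrite !andbF !orbF => /andP[exz _] /andP[ezy _]; apply: (e_tri_free exz ezy);
   rewrite e_sym.
Qed.

(* The middle vertex of a long step 0 -> 2 lies strictly between its ends. *)
Lemma covers_edge x y : covers colour_order x y -> e x y.
Proof.
case/and3P=> nxy; rewrite /colour_order (negbTE nxy) /= => + /forallP between.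
case/orP=> [/andP[// _] | /and3P[/eqP cx0 /eqP cy2 /existsP[z /and3P[exz ezy /eqP cz1]]]].
move: (between z); rewrite /colour_order exz ezy cx0 cy2 cz1 /= !orbT.
by case/orP=> /eqP czxy; move: cz1; rewrite czxy ?cx0 ?cy2.
Qed.

Lemma three_coloured_cover_graph : cover_graph e.
Proof.
exists colour_order; split; first exact: colour_order_partial.
move=> x y; apply/idP/idP; last by case/orP=> /covers_edge; rewrite // e_sym.
move=> exy; have := c_proper exy; case: ltngtP => // cxy _.
- by rewrite edge_covers.
- by rewrite (@edge_covers y x) ?orbT // e_sym.
Qed.

End ThreeColouring.

Lemma triangle_free_colorable3_cover_graph (e : rel T) :
  symmetric e -> triangle_free e -> colorable e 3 -> cover_graph e.
Proof.
move=> e_sym e_tri_free /existsP[f /forallP f_proper].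
apply: (@three_coloured_cover_graph e (fun x => f x)) => // x y exy.
by have /forallP/(_ y) := f_proper x; rewrite exy.
Qed.

End CoverGraphs.

Section GirthAndColouring.
Variables (T : finType) (e : rel T).

Lemma girth_cycle k : girth e = Some k -> has_cycle_of_length e k.
Proof.
rewrite /girth; case E: [seq _ <- _ | _] => [|k' s] //= [<-].
have : k' \in [seq k <- iota 0 #|T|.+1 | has_cycle_of_length e k].
  by rewrite E mem_head.
by rewrite mem_filter => /andP[].
Qed.

Lemma girth_leq k : has_cycle_of_length e k -> exists2 g, girth e = Some g & g <= k.
Proof.
move=> cyc_k.
have k_le_card : k <= #|T|.
  case/existsP: cyc_k => t /and3P[_ /card_uniqP t_uniq _].
  by rewrite -(size_tuple t) -t_uniq max_card.
have : k \in [seq k <- iota 0 #|T|.+1 | has_cycle_of_length e k].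
  by rewrite mem_filter cyc_k mem_iota.
have := sorted_filter ltn_trans (has_cycle_of_length e) (iota_ltn_sorted 0 #|T|.+1).
rewrite /girth; case: [seq _ <- _ | _] => // g s g_path k_in.
exists g => //; have /allP g_min := order_path_min ltn_trans g_path.
by move: k_in; rewrite inE => /orP[/eqP -> // | /g_min /ltnW].
Qed.

Lemma cycle3_triangle :
  has_cycle_of_length e 3 -> exists x y z, [/\ e x y, e y z & e z x].
Proof.
case/existsP=> [[[|x [|y [|z [|]]]] //= _]].
by case/and3P=> _ _ /and4P[exy eyz ezx _]; exists x, y, z.
Qed.

Hypothesis e_irr : irreflexive e.

Lemma triangle_cycle3 x y z : e x y -> e y z -> e z x -> has_cycle_of_length e 3.
Proof.
move=> exy eyz ezx; apply/existsP; exists [tuple x; y; z].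
have neq a b : e a b -> a != b by apply: contraTneq => ->; rewrite e_irr.
rewrite /is_graph_cycle /= exy eyz ezx !inE !andbT negb_or.
by rewrite (neq _ _ exy) (neq _ _ eyz) eq_sym (neq _ _ ezx).
Qed.

Lemma girth_gt3_triangle_free :
  (match girth e with None => true | Some g => 3 < g end) -> triangle_free e.
Proof.
move=> girth_gt3 x y z exy eyz ezx.
have [g eg g_le3] := girth_leq (triangle_cycle3 exy eyz ezx).
by rewrite eg ltnNge g_le3 in girth_gt3.
Qed.

Lemma colorable_card : colorable e #|T|.
Proof.
apply/existsP; exists [ffun x => enum_rank x].
apply/forallP=> x; apply/forallP=> y; apply/implyP=> exy; rewrite !ffunE.
by apply: contraTneq exy => /enum_rank_inj ->; rewrite e_irr.
Qed.

Lemma colorable_widen k m : k <= m -> colorable e k -> colorable e m.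
Proof.
move=> le_km /existsP[f /forallP f_proper]; apply/existsP.
exists [ffun x => widen_ord le_km (f x)].
apply/forallP=> x; apply/forallP=> y; apply/implyP=> exy.
rewrite !ffunE -val_eqE /= val_eqE.
by have /forallP/(_ y) := f_proper x; rewrite exy.
Qed.

Lemma colorable_chromatic_number : colorable e (chromatic_number e).
Proof.
have has_col : has (colorable e) (iota 0 #|T|.+1).
  by apply/hasP; exists #|T|; rewrite ?mem_iota ?ltnSn //; apply: colorable_card.
have := nth_find 0 has_col; rewrite nth_iota ?add0n //.
by move: has_col; rewrite has_find size_iota.
Qed.

End GirthAndColouring.

Section DirectProduct.
Variables (T U : finType) (eG : rel T) (eH : rel U).

Lemma direct_product_sym :
  symmetric eG -> symmetric eH -> symmetric (direct_product eG eH).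
Proof. by move=> symG symH x y; rewrite /direct_product symG symH. Qed.

Lemma direct_product_triangle_free :
  triangle_free eG -> triangle_free (direct_product eG eH).
Proof. by move=> G_tri_free x y z /andP[+ _] /andP[+ _] /andP[+ _]; apply: G_tri_free. Qed.

Lemma direct_product_colorable k :
  colorable eH k -> colorable (direct_product eG eH) k.
Proof.
case/existsP=> f /forallP f_proper; apply/existsP; exists [ffun x => f x.2].
apply/forallP=> x; apply/forallP=> y; apply/implyP=> /andP[_ exy].
by rewrite !ffunE; have /forallP/(_ y.2) := f_proper x.2; rewrite exy.
Qed.

End DirectProduct.

Theorem theorem6 (T U : finType) (eG : rel T) (eH : rel U)
  (symG : symmetric eG) (irrG : irreflexive eG)
  (symH : symmetric eH) (irrH : irreflexive eH) :
  (girth eG = Some 3 -> girth eH = Some 3 ->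
     ~ cover_graph (direct_product eG eH)) /\
  ((match girth eG with None => true | Some g => 3 < g end) ->
     chromatic_number eH <= 3 ->
     cover_graph (direct_product eG eH)).
Proof.
split.
- move=> /girth_cycle/cycle3_triangle[a1 [a2 [a3 [ea12 ea23 ea31]]]].
  move=> /girth_cycle/cycle3_triangle[b1 [b2 [b3 [eb12 eb23 eb31]]]].
  move=> /cover_graph_triangle_free tri_free.
  by apply: (tri_free (a1, b1) (a2, b2) (a3, b3)); apply/andP.
- move=> girth_gt3 chi_le3.
  apply: triangle_free_colorable3_cover_graph.
  + exact: direct_product_sym.
  + exact/direct_product_triangle_free/girth_gt3_triangle_free.
  + exact/direct_product_colorable/(colorable_widen chi_le3)/colorable_chromatic_number.
Qed.
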